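(* Let $\zeta_5$ be a primitive $5$-th root of unity. (1) $\left\{J_{\frac rs}(\zeta_5) : \tfrac rs>1\right\}=\{0,\ c,\ (\zeta_5-1)c,\ (\zeta_5^2+1)c : c=\pm\zeta_5^j,\ j=0,1,\dots,4\}$. (2) For an irreducible fraction $\frac rs>1$, $J_{\frac rs}(\zeta_5)=0$ if and only if $r\in 5\mathbb{Z}$ and $s\equiv 2$ or $3\pmod 5$.
   Context: Let $q$ be a formal parameter, $R_q=\begin{pmatrix} q & 1\\ 0 & 1\end{pmatrix}$, $S_q=\begin{pmatrix} 0 & -q^{-1}\\ 1 & 0\end{pmatrix}$, and for integers $c_1,\dots,c_k$ put $M_q(c_1,\dots,c_k)=R_q^{c_1}S_q\cdots R_q^{c_k}S_q$. Every irreducible fraction $\frac{r}{s}>1$ has a unique negative continued fraction expansion $\frac{r}{s}=c_1-\cfrac{1}{c_2-\cfrac{1}{\ddots-\cfrac{1}{c_k}}}$ with all $c_i\ge 2$; define $\mathcal{R}_{\frac rs}(q),\mathcal{S}_{\frac rs}(q)$ by $M_q(c_1,\dots,c_k)=\begin{pmatrix}\mathcal{R}_{\frac rs}(q) & *\\ \mathcal{S}_{\frac rs}(q) & *\end{pmatrix}$. Define $J_{\frac rs}(q)=q\,\mathcal{R}_{\frac rs}(q)+(1-q)\,\mathcal{S}_{\frac rs}(q)$; this is the normalized Jones polynomial of the rational (2-bridge) link $L(\frac rs)$, i.e. $\pm t^{-h}V_{L(r/s)}(t)|_{t=-q^{-1}}$ where $V$ is the Jones polynomial and $\pm t^h$ its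 leading term. *)

From HB Require Import structures.
From mathcomp Require Import all_boot all_order all_algebra all_field.
Set Implicit Arguments. Unset Strict Implicit. Unset Printing Implicit Defensive.
Import Order.TTheory GRing.Theory Num.Theory.
Local Open Scope ring_scope.

(* Negative continued fraction expansion r/s = c_1 - 1/(c_2 - 1/(... - 1/c_k)),
   all c_i >= 2, for coprime r > s >= 1.  Computed greedily:
   c_1 = ceil(r/s), and r/s = c_1 - 1/(s/(c_1 s - r)).  [fuel] bounds the
   recursion (fuel = r suffices since the numerators strictly decrease). *)
Fixpoint ncf_aux (fuel r s : nat) : seq nat :=
  match fuel with
  | 0 => [::]
  | f.+1 =>
      let c := ((r + s).-1 %/ s)%N in
      let d := (c * s - r)%N in
      if d == 0%N then [:: c] else c :: ncf_aux f s d
  end.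

Definition ncf (r s : nat) : seq nat := ncf_aux r r s.

Fixpoint ncf_val (cs : seq nat) : rat :=
  match cs with
  | [::] => 0
  | [:: c] => c%:R
  | c :: cs' => c%:R - (ncf_val cs')^-1
  end.

Section Jones.
Variable F : fieldType.

Definition Rq (q : F) : 'M[F]_2 :=
  \matrix_(i < 2, j < 2)
    (if (i == 0) && (j == 0) then q else if i == 0 then 1 else if j == 1 then 1 else 0).

Definition Sq (q : F) : 'M[F]_2 :=
  \matrix_(i < 2, j < 2)
    (if (i == 0) && (j == 1) then - q^-1 else if (i == 1) && (j == 0) then 1 else 0).

Definition Mq (q : F) (cs : seq nat) : 'M[F]_2 :=
  foldr (fun c A => (Rq q ^+ c) *m Sq q *m A) 1%:M cs.

Definition calR (r s : nat) (q : F) : F := Mq q (ncf r s) 0 0.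
Definition calS (r s : nat) (q : F) : F := Mq q (ncf r s) 1 0.

Definition Jones (r s : nat) (q : F) : F := q * calR r s q + (1 - q) * calS r s q.
End Jones.

From HB Require Import structures.
From mathcomp Require Import all_boot all_order all_algebra all_field.
From mathcomp Require Import zify ring.
Import GRing.Theory Num.Theory.
Local Open Scope ring_scope.

(* At q = ζ, a primitive 5th root of unity, the matrices R_ζ and S_ζ have entries
   in Z[ζ], so the first column (R_{r/s}(ζ), S_{r/s}(ζ)) of M_ζ(c_1, ..., c_k)
   lies in the orbit of e_1 under the group <R_ζ, S_ζ>, which is finite (120
   vectors).  Computing this orbit exactly in Z[ζ] = Z^4 gives every possible
   value of J = ζR + (1 - ζ)S, and each value is attained by an explicit fraction.
   Reducing Z[ζ] modulo the prime above 5 (ζ ↦ 1 in F_5) turns M_ζ into M_1,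
   whose first column is (r, s); this ties each orbit vector to r and s mod 5
   and yields the vanishing criterion. *)

Definition cvec {R : ringType} (a b : R) : 'cV[R]_2 :=
  \col_i (if i == 0 then a else b).

Lemma mulmx_cvec10 {R : ringType} (A : 'M[R]_2) i : (A *m cvec 1 0) i 0 = A i 0.
Proof. by rewrite mxE !big_ord_recl big_ord0 !mxE /= mulr1 mulr0 !addr0. Qed.

Section JonesMatrices.
Context {F : fieldType}.
Implicit Types (q a b : F).

Lemma Rq_cvec q a b : Rq q *m cvec a b = cvec (q * a + b) b.
Proof.
apply/matrixP => i j; rewrite !mxE !big_ord_recl big_ord0 !mxE.
by case: i => [[|[|//]] ?] /=; ring.
Qed.

Lemma Sq_cvec q a b : Sq q *m cvec a b = cvec (- q^-1 * b) a.
Proof.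
apply/matrixP => i j; rewrite !mxE !big_ord_recl big_ord0 !mxE.
by case: i => [[|[|//]] ?] /=; ring.
Qed.

Lemma Mq_cons q c cs : Mq q (c :: cs) = Rq q ^+ c *m Sq q *m Mq q cs.
Proof. by []. Qed.

Lemma Rq1X_cvec n a b : Rq 1 ^+ n *m cvec a b = cvec (a + n%:R * b) b.
Proof.
elim: n => [|n IH]; first by rewrite expr0 mul1mx mul0r addr0.
by rewrite exprS -mulmxA IH Rq_cvec mul1r mulrSr; congr cvec; ring.
Qed.

End JonesMatrices.

Lemma ncf_digit_bounds r s : (0 < s)%N -> (r <= (r + s).-1 %/ s * s < r + s)%N.
Proof.
by move=> s_gt0; have := divn_eq (r + s).-1 s; have := ltn_pmod (r + s).-1 s_gt0; lia.
Qed.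

Lemma coprime_ncf_remainder r s c d : (r + d = c * s)%N -> coprime r s -> coprime s d.
Proof.
move=> rdE co; rewrite /coprime -dvdn1 -(eqP co) dvdn_gcd dvdn_gcdl andbT.
by rewrite -(dvdn_addl _ (dvdn_gcdr s d)) rdE dvdn_mull // dvdn_gcdl.
Qed.

(* Each digit c with remainder d = c s - r satisfies (r, s) = R_1^c S_1 (s, d). *)
Lemma Mq1_ncf_aux {F : fieldType} f r s : (0 < s)%N -> (s < r)%N -> (r <= f)%N ->
  coprime r s -> Mq (1 : F) (ncf_aux f r s) *m cvec 1 0 = cvec r%:R s%:R.
Proof.
elim: f r s => [|f IH] r s s_gt0 s_lt_r r_le_f co; first by lia.
have := ncf_digit_bounds r s s_gt0; rewrite [ncf_aux _ _ _]/=.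
set c := (_ %/ s)%N; set d := (c * s - r)%N => bounds.
have rdE : (r + d = c * s)%N by lia.
have rE : r%:R = c%:R * s%:R - d%:R :> F by rewrite -natrM -rdE natrD addrK.
case: eqP => [d0 | /eqP d_neq0].
  have s1 : s = 1%N.
    have rcs : r = (c * s)%N by rewrite -rdE d0 addn0.
    by apply/eqP; rewrite -(eqP co) gcdnC rcs gcdnMl.
  rewrite Mq_cons mulmx1 -mulmxA Sq_cvec invr1 Rq1X_cvec rE d0 s1; congr cvec; ring.
rewrite Mq_cons -!mulmxA IH ?Sq_cvec ?invr1 ?Rq1X_cvec ?rE; first (congr cvec; ring).
1-3: by lia.
exact: coprime_ncf_remainder rdE co.
Qed.

Lemma calRS_at1 {F : fieldType} r s : (0 < s)%N -> (s < r)%N -> coprime r s ->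
  calR r s (1 : F) = r%:R /\ calS r s (1 : F) = s%:R.
Proof.
move=> s_gt0 s_lt_r co.
by rewrite /calR /calS -!mulmx_cvec10 Mq1_ncf_aux // !mxE.
Qed.

Lemma prim_root_sum_eq0 {R : idomainType} {n} {z : R} :
  (1 < n)%N -> n.-primitive_root z -> \sum_(i < n) z ^+ i = 0.
Proof.
move=> n_gt1 hz; have := subrX1 z n; rewrite prim_expr_order // subrr => /esym/eqP.
rewrite mulf_eq0 subr_eq0 -[z in z == 1]expr1 -(prim_order_dvd hz) dvdn1 gtn_eqF //.
by move/eqP.
Qed.

Lemma prim5_sum {R : idomainType} {z : R} : 5.-primitive_root z ->
  1 + z + z ^+ 2 + z ^+ 3 + z ^+ 4 = 0.
Proof.
move=> hz; have := prim_root_sum_eq0 (isT : 1 < 5)%N hz.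
by rewrite !big_ord_recl big_ord0 /bump /= expr0 expr1 addr0 !addrA.
Qed.

(* (a, b, c, d) stands for a + bζ + cζ^2 + dζ^3 in Z[ζ], ζ a primitive 5th root of unity. *)
Definition cyc5 := (int * int * int * int)%type.

Definition cyc5_zero : cyc5 := (0, 0, 0, 0).
Definition cyc5_one : cyc5 := (1, 0, 0, 0).

Definition cyc5_add (x y : cyc5) : cyc5 :=
  let: (a, b, c, d) := x in let: (a', b', c', d') := y in
  (a + a', b + b', c + c', d + d').

Definition cyc5_opp (x : cyc5) : cyc5 :=
  let: (a, b, c, d) := x in (- a, - b, - c, - d).

(* Multiplication by ζ, using ζ^4 = - 1 - ζ - ζ^2 - ζ^3. *)
Definition cyc5_mulz (x : cyc5) : cyc5 :=
  let: (a, b, c, d) := x in (- d, a - d, b - d, c - d).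

Definition cyc5_eval {R : ringType} (z : R) (x : cyc5) : R :=
  let: (a, b, c, d) := x in a%:~R + b%:~R * z + c%:~R * z ^+ 2 + d%:~R * z ^+ 3.

Section Cyc5Eval.
Context {R : comRingType} {z : R}.

Lemma cyc5_eval0 : cyc5_eval z cyc5_zero = 0.
Proof. by rewrite /= !mul0r !addr0. Qed.

Lemma cyc5_evalD x y : cyc5_eval z (cyc5_add x y) = cyc5_eval z x + cyc5_eval z y.
Proof. by case: x => [[[a b] c] d]; case: y => [[[a' b'] c'] d'] /=; rewrite !intrD; ring. Qed.

Lemma cyc5_evalN x : cyc5_eval z (cyc5_opp x) = - cyc5_eval z x.
Proof. by case: x => [[[a b] c] d] /=; rewrite !intrN; ring. Qed.

Hypothesis cyclo5 : 1 + z + z ^+ 2 + z ^+ 3 + z ^+ 4 = 0.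

Lemma cyc5_eval_mulz x : cyc5_eval z (cyc5_mulz x) = z * cyc5_eval z x.
Proof.
case: x => [[[a b] c] d] /=; rewrite !intrB intrN.
by rewrite -[RHS]subr0 -(mulr0 d%:~R) -cyclo5; ring.
Qed.

Lemma cyc5_eval_iter_mulz n x : cyc5_eval z (iter n cyc5_mulz x) = z ^+ n * cyc5_eval z x.
Proof. by elim: n => [|n IH]; rewrite ?mul1r //= cyc5_eval_mulz IH exprS mulrA. Qed.

End Cyc5Eval.

Definition cyc5_R (v : cyc5 * cyc5) : cyc5 * cyc5 := (cyc5_add (cyc5_mulz v.1) v.2, v.2).

(* S_ζ, using ζ^-1 = ζ^4. *)
Definition cyc5_S (v : cyc5 * cyc5) : cyc5 * cyc5 := (cyc5_opp (iter 4 cyc5_mulz v.2), v.1).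

Definition cyc5_col (cs : seq nat) : cyc5 * cyc5 :=
  foldr (fun c v => iter c cyc5_R (cyc5_S v)) (cyc5_one, cyc5_zero) cs.

Definition cyc5_jones (v : cyc5 * cyc5) : cyc5 :=
  cyc5_add (cyc5_add (cyc5_mulz v.1) v.2) (cyc5_opp (cyc5_mulz v.2)).

Section Cyc5Jones.
Context {F : fieldType} {z : F}.
Hypothesis cyclo5 : 1 + z + z ^+ 2 + z ^+ 3 + z ^+ 4 = 0.

Let cvec_eval (v : cyc5 * cyc5) := cvec (cyc5_eval z v.1) (cyc5_eval z v.2).

Lemma cyclo5_invE : z^-1 = z ^+ 4.
Proof.
have zz4 : z * z ^+ 4 = 1.
  by apply/eqP; rewrite -subr_eq0 -(mulr0 (z - 1)) -cyclo5; apply/eqP; ring.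
have z_neq0 : z != 0 by apply: contra_eq_neq zz4 => ->; rewrite mul0r eq_sym oner_neq0.
by rewrite -[z^-1]mulr1 -zz4 mulKf.
Qed.

Lemma Rq_cyc5 v : Rq z *m cvec_eval v = cvec_eval (cyc5_R v).
Proof. by rewrite /cvec_eval Rq_cvec /= cyc5_evalD cyc5_eval_mulz. Qed.

Lemma Sq_cyc5 v : Sq z *m cvec_eval v = cvec_eval (cyc5_S v).
Proof.
rewrite /cvec_eval Sq_cvec /= cyc5_evalN !cyc5_eval_mulz // cyclo5_invE.
by congr cvec; ring.
Qed.

Lemma Mq_cyc5_col cs : Mq z cs *m cvec 1 0 = cvec_eval (cyc5_col cs).
Proof.
elim: cs => [|c cs IH]; first by rewrite mul1mx /cvec_eval /=; congr cvec; ring.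
rewrite Mq_cons -!mulmxA IH Sq_cyc5 /=.
by elim: c => [|c IHc]; rewrite ?mul1mx // exprS -mulmxA IHc Rq_cyc5.
Qed.

Lemma calRS_cyc5 r s : calR r s z = cyc5_eval z (cyc5_col (ncf r s)).1 /\
                       calS r s z = cyc5_eval z (cyc5_col (ncf r s)).2.
Proof. by rewrite /calR /calS -!mulmx_cvec10 Mq_cyc5_col !mxE. Qed.

Lemma Jones_cyc5 r s : Jones r s z = cyc5_eval z (cyc5_jones (cyc5_col (ncf r s))).
Proof.
rewrite /Jones; have [-> ->] := calRS_cyc5 r s.
by rewrite /= !cyc5_evalD cyc5_evalN !cyc5_eval_mulz //; ring.
Qed.

End Cyc5Jones.

(* Reduction of Z[ζ] modulo the prime above 5, ζ ↦ 1 in F_5. *)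
Definition res5 (x : cyc5) : nat := val (cyc5_eval (1 : 'F_5) x).

Lemma res5_cyc5_col r s : (0 < s)%N -> (s < r)%N -> coprime r s ->
  res5 (cyc5_col (ncf r s)).1 = (r %% 5)%N /\ res5 (cyc5_col (ncf r s)).2 = (s %% 5)%N.
Proof.
move=> s_gt0 s_lt_r co.
have cyclo5_1 : 1 + 1 + 1 ^+ 2 + 1 ^+ 3 + 1 ^+ 4 = 0 :> 'F_5 by rewrite !expr1n; apply/eqP.
have [R1 S1] := calRS_at1 (F := 'F_5) r s s_gt0 s_lt_r co.
have [R1' S1'] := calRS_cyc5 cyclo5_1 r s.
by rewrite /res5 -R1' -S1' R1 S1; split; apply: val_Fp_nat.
Qed.

Definition orbit_step {T : eqType} (fs : seq (T -> T)) (s : seq T) : seq T :=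
  undup (s ++ [seq f x | f <- fs, x <- s]).

(* Twelve rounds reach the whole orbit of e_1; cyc5_orbit_closed certifies it. *)
Definition cyc5_orbit : seq (cyc5 * cyc5) :=
  iter 12 (orbit_step [:: cyc5_R; cyc5_S]) [:: (cyc5_one, cyc5_zero)].

Lemma cyc5_orbit_closed :
  all (fun v => (cyc5_R v \in cyc5_orbit) && (cyc5_S v \in cyc5_orbit)) cyc5_orbit.
Proof. by vm_compute. Qed.

Lemma cyc5_col_orbit cs : cyc5_col cs \in cyc5_orbit.
Proof.
have [R_in S_in] : {homo cyc5_R : v / v \in cyc5_orbit} /\ {homo cyc5_S : v / v \in cyc5_orbit}.
  by split=> v /(allP cyc5_orbit_closed) /andP [].
elim: cs => [|c cs IH]; first by vm_compute.
rewrite [cyc5_col _]/=; elim: c => [|c IHc]; [exact: S_in | exact: R_in].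
Qed.

(* ζ^j (-1)^b times 1, ζ - 1 or ζ^2 + 1 according to k = 0, 1, 2. *)
Definition cyc5_value (b : bool) (j k : nat) : cyc5 :=
  iter j cyc5_mulz ((if b then cyc5_opp else id)
                      (nth cyc5_zero [:: cyc5_one; (-1, 1, 0, 0); (1, 0, 1, 0)] k)).

Definition cyc5_values : seq cyc5 :=
  flatten [seq [seq cyc5_value b j k | j <- iota 0 5, k <- iota 0 3] | b <- [:: false; true]].

Lemma cyc5_valuesP t :
  reflect (exists b j k, [/\ (j < 5)%N, (k < 3)%N & t = cyc5_value b j k]) (t \in cyc5_values).
Proof.
apply: (iffP flattenP) => [[_ /mapP [b _ ->] /allpairsP [[j k] [j_in k_in ->]]] | ].
  by exists b, j, k; move: j_in k_in; rewrite !mem_iota.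
move=> [b [j [k [j_lt5 k_lt3 ->]]]].
exists [seq cyc5_value b j k | j <- iota 0 5, k <- iota 0 3]; first by apply/mapP; exists b; case: b.
by apply/allpairsP; exists (j, k); rewrite !mem_iota.
Qed.

Lemma cyc5_orbit_jones_values :
  all (fun v => (cyc5_jones v == cyc5_zero) || (cyc5_jones v \in cyc5_values)) cyc5_orbit.
Proof. by vm_compute. Qed.

Lemma cyc5_orbit_jones_eq0 :
  all (fun v => (cyc5_jones v == cyc5_zero) ==
                (res5 v.1 == 0%N) && (res5 v.2 \in [:: 2; 3]%N))
      cyc5_orbit.
Proof. by vm_compute. Qed.

Definition jones_witnesses : seq (nat * nat) :=
  [:: (6, 1); (30, 19); (2, 1); (6, 5); (20, 9); (17, 11); (11, 5); (45, 14);
      (27, 16); (16, 5); (80, 19); (7, 2); (21, 5); (5, 4); (12, 7); (24, 5);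
      (5, 1); (28, 11); (4, 1); (20, 11); (8, 3); (9, 2); (15, 11); (3, 2);
      (4, 3); (25, 11); (18, 7); (9, 4); (80, 31); (3, 1)]%N.

Lemma jones_witnessesP :
  all (fun t => has (fun rs : nat * nat =>
     [&& 0 < rs.2, rs.2 < rs.1, coprime rs.1 rs.2 &
         cyc5_jones (cyc5_col (ncf rs.1 rs.2)) == t]%N) jones_witnesses) cyc5_values.
Proof. by vm_compute. Qed.

Section Prim5.
Context {F : fieldType} {z : F}.
Hypothesis hz : 5.-primitive_root z.

Lemma cyc5_eval_value b j k :
  cyc5_eval z (cyc5_value b j k) = z ^+ j * ((-1) ^+ b * [:: 1; z - 1; z ^+ 2 + 1]`_k).
Proof.
rewrite cyc5_eval_iter_mulz ?prim5_sum //; congr (_ * _).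
by case: b; case: k => [|[|[|k]]] /=; rewrite ?cyc5_evalN ?nth_nil ?cyc5_eval0 /=; ring.
Qed.

Lemma cyc5_eval_value_neq0 b j k : (k < 3)%N -> cyc5_eval z (cyc5_value b j k) != 0.
Proof.
move=> k_lt3; have z_neq0 : z != 0 by rewrite (prim_root_eq0 hz).
rewrite cyc5_eval_value !mulf_neq0 ?expf_neq0 ?oppr_eq0 ?oner_eq0 //.
case: k k_lt3 => [|[|[|//]]] _ /=; first exact: oner_neq0.
  by rewrite subr_eq0 -[z in z == 1]expr1 -(prim_order_dvd hz).
rewrite addr_eq0; apply/negP => /eqP z2; have := prim_order_dvd hz 4.
by rewrite -[4%N]/(2 * 2)%N exprM z2 sqrrN expr1n eqxx.
Qed.

Lemma jones_valueP (x : F) :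
  (exists (b : bool) (j : nat), (j < 5)%N /\
     let c := (-1) ^+ b * z ^+ j in [\/ x = c, x = (z - 1) * c | x = (z ^+ 2 + 1) * c])
  <-> exists b j k, [/\ (j < 5)%N, (k < 3)%N & x = cyc5_eval z (cyc5_value b j k)].
Proof.
rewrite /=; split => [[b [j [j_lt5 hx]]] | [b [j [k [j_lt5 k_lt3 ->]]]]].
  exists b, j; case: hx => ->; [exists 0%N | exists 1%N | exists 2%N];
    by split=> //; rewrite cyc5_eval_value /=; ring.
exists b, j; split=> //; rewrite cyc5_eval_value.
by case: k k_lt3 => [|[|[|//]]] _ /=; [apply: Or31 | apply: Or32 | apply: Or33]; ring.
Qed.

Lemma cyc5_jones_col_cases cs :
  cyc5_jones (cyc5_col cs) = cyc5_zero \/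
  exists b j k, [/\ (j < 5)%N, (k < 3)%N & cyc5_jones (cyc5_col cs) = cyc5_value b j k].
Proof.
case/orP: (allP cyc5_orbit_jones_values _ (cyc5_col_orbit cs)) => [/eqP | /cyc5_valuesP]; auto.
Qed.

Lemma Jones_prim5_eq0_cyc5 r s :
  (Jones r s z == 0) = (cyc5_jones (cyc5_col (ncf r s)) == cyc5_zero).
Proof.
rewrite (Jones_cyc5 (prim5_sum hz)).
case: (cyc5_jones_col_cases (ncf r s)) => [-> | [b [j [k [_ k_lt3 ->]]]]].
  by rewrite cyc5_eval0 !eqxx.
have v_neq0 := cyc5_eval_value_neq0 b j k k_lt3.
rewrite (negbTE v_neq0); apply/esym/eqP => v0.
by rewrite v0 cyc5_eval0 eqxx in v_neq0.
Qed.

Lemma Jones_prim5_eq0 r s : (0 < s)%N -> (s < r)%N -> coprime r s ->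
  Jones r s z = 0 <-> (5 %| r)%N /\ (s %% 5 = 2 \/ s %% 5 = 3)%N.
Proof.
move=> s_gt0 s_lt_r co; have [r5 s5] := res5_cyc5_col r s s_gt0 s_lt_r co.
have /eqP := allP cyc5_orbit_jones_eq0 _ (cyc5_col_orbit (ncf r s)).
rewrite -Jones_prim5_eq0_cyc5 r5 s5 !inE => J0E.
split => [/eqP | [r_dvd s23]]; first by rewrite J0E => /andP [r_dvd /orP [] /eqP]; auto.
by apply/eqP; rewrite J0E (eqP r_dvd); case: s23 => ->.
Qed.

Lemma Jones_prim5_cases r s :
  Jones r s z = 0 \/
  exists b j k, [/\ (j < 5)%N, (k < 3)%N & Jones r s z = cyc5_eval z (cyc5_value b j k)].
Proof.
rewrite (Jones_cyc5 (prim5_sum hz)).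
case: (cyc5_jones_col_cases (ncf r s)) => [-> | [b [j [k [j_lt5 k_lt3 ->]]]]].
  by left; rewrite cyc5_eval0.
by right; exists b, j, k.
Qed.

Lemma Jones_prim5_attains b j k : (j < 5)%N -> (k < 3)%N ->
  exists r s, [/\ (0 < s)%N, (s < r)%N, coprime r s &
                  cyc5_eval z (cyc5_value b j k) = Jones r s z].
Proof.
move=> j_lt5 k_lt3.
have t_in : cyc5_value b j k \in cyc5_values by apply/cyc5_valuesP; exists b, j, k.
have /hasP [[r s] _ /and4P [s_gt0 s_lt_r co /eqP Jrs]] := allP jones_witnessesP _ t_in.
by exists r, s; split => //; rewrite (Jones_cyc5 (prim5_sum hz)) Jrs.
Qed.

End Prim5.

Theorem corollary3p10 (z : algC) (hz : 5.-primitive_root z) :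
  (* (1) the set of values J_{r/s}(zeta_5), r/s > 1 irreducible *)
  (forall x : algC,
     (exists r s : nat, [/\ (0 < s)%N, (s < r)%N, coprime r s & x = Jones r s z])
     <->
     (x = 0 \/
      exists (b : bool) (j : nat), (j < 5)%N /\
        let c := (-1) ^+ b * z ^+ j in
        [\/ x = c, x = (z - 1) * c | x = (z ^+ 2 + 1) * c]))
  /\
  (* (2) vanishing criterion *)
  (forall r s : nat, (0 < s)%N -> (s < r)%N -> coprime r s ->
     (Jones r s z = 0 <->
      (5 %| r)%N /\ (s %% 5 = 2 \/ s %% 5 = 3)%N)).
Proof.
split=> [x | r s]; last exact: Jones_prim5_eq0.
split=> [[r [s [_ _ _ ->]]] | [-> | /(jones_valueP hz) [b [j [k [j_lt5 k_lt3 ->]]]]]].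
- case: (Jones_prim5_cases hz r s) => [-> | vals]; first by left.
  by right; apply/(jones_valueP hz).
- exists 5%N, 2%N; split=> //.
  by apply/esym/(Jones_prim5_eq0 hz) => //; split=> //; left.
- exact: Jones_prim5_attains.
Qed.
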